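(* Let $\mathcal D$ be universal, $\mathrm H=(H,d)\in\mathfrak U_{\mathcal D}$, and let $\mathfrak t$ be a Katětov function of $\mathrm H$ with nonempty domain. Let $\mathcal D_{\mathfrak t}=\{n\in\mathcal D: n\le 2\operatorname{rank}(\mathfrak t)\}$. Then $\mathcal D_{\mathfrak t}$ is universal and the subspace of $\mathrm H$ on $\operatorname{orb}(\mathfrak t)$ is isometric to $\mathbf U_{\mathcal D_{\mathfrak t}}$; in particular $\operatorname{orb}(\mathfrak t)$ is infinite.
   Context: $\mathcal D$ is a finite subset of $\mathbb R_{\ge0}$ containing $0$. $\mathfrak U_{\mathcal D}$ is the class of countable homogeneous metric spaces (every isometry between finite subspaces extends to an isometry of the space onto itself) with distance set exactly $\mathcal D$ into which every finite metric space with distances in $\mathcal D$ embeds isometrically; these are all isometric, $\mathbf U_{\mathcal D}$ denotes one of them, and $\mathcal D$ is universal if the class is nonempty. For a metric space $(M,d)$ with distances in $\mathcal D$, a Katětov function is a map $\mathfrak t:F\to\mathcal D\setminus\{0\}$, $F\subseteq M$ finite, with $|\mathfrak t(x)-\mathfrak t(y)|\le d(x,y)\le\mathfrak t(x)+\mathfrak t(y)$ for all $x,y\in F$. Its orbit is $\operatorname{orb}(\mathfrak t)=\{y\in M\setminus F: d(y,x)=\mathfrak t(x)\text{ for all }x\in F\}$ and its rank is $\operatorname{rank}(\mathfrak t)=\min_{x\in F}\mathfrak t(x)$. *)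

From Stdlib Require Import Reals List.
Import ListNotations.
Open Scope R_scope.

Definition is_metric (M : Type) (d : M -> M -> R) : Prop :=
  (forall x y, 0 <= d x y) /\
  (forall x y, d x y = 0 <-> x = y) /\
  (forall x y, d x y = d y x) /\
  (forall x y z, d x z <= d x y + d y z).

Definition countable (M : Type) : Prop :=
  exists f : M -> nat, forall x y, f x = f y -> x = y.

Definition distance_set_eq (D : list R) (M : Type) (d : M -> M -> R) : Prop :=
  (forall x y, In (d x y) D) /\ (forall r, In r D -> exists x y, d x y = r).

(* Every isometry between finite subspaces extends to a surjective isometry.
   A finite subspace is given by a list A; the partial isometry is g restricted to A. *)
Definition homogeneous (M : Type) (d : M -> M -> R) : Prop :=
  forall (A : list M) (g : M -> M),
    (forall x y, In x A -> In y A -> d (g x) (g y) = d x y) ->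
    exists h : M -> M,
      (forall x y, d (h x) (h y) = d x y) /\
      (forall y, exists x, h x = y) /\
      (forall x, In x A -> h x = g x).

Definition D_universal_space (D : list R) (M : Type) (d : M -> M -> R) : Prop :=
  forall (F : Type) (dF : F -> F -> R),
    is_metric F dF ->
    (exists l : list F, forall x, In x l) ->
    (forall x y, In (dF x y) D) ->
    exists f : F -> M, forall x y, d (f x) (f y) = dF x y.

Definition in_U (D : list R) (M : Type) (d : M -> M -> R) : Prop :=
  is_metric M d /\ countable M /\ homogeneous M d /\
  distance_set_eq D M d /\ D_universal_space D M d.

Definition universal (D : list R) : Prop :=
  exists (M : Type) (d : M -> M -> R), in_U D M d.

Definition katetov (D : list R) (M : Type) (d : M -> M -> R)
    (F : list M) (t : M -> R) : Prop :=
  (forall x, In x F -> In (t x) D /\ t x <> 0) /\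
  (forall x y, In x F -> In y F ->
     Rabs (t x - t y) <= d x y /\ d x y <= t x + t y).

Definition orb (M : Type) (d : M -> M -> R) (F : list M) (t : M -> R) (y : M) : Prop :=
  ~ In y F /\ forall x, In x F -> d y x = t x.

Definition rank (M : Type) (F : list M) (t : M -> R) : R :=
  match F with
  | [] => 0
  | x :: xs => fold_right (fun y acc => Rmin (t y) acc) (t x) xs
  end.

Definition D_restrict (D : list R) (r : R) : list R :=
  filter (fun n => if Rle_dec n (2 * r) then true else false) D.

Definition isometric (M : Type) (d : M -> M -> R) (N : Type) (e : N -> N -> R) : Prop :=
  exists f : M -> N,
    (forall x y, e (f x) (f y) = d x y) /\ (forall z, exists x, f x = z).

(* Let x0 be a point where t attains its rank r. By the triangle inequality through x0, two
   points of the orbit are at distance at most 2r, so the distances of the orbit lie in D_t.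
   A finite metric space G with distances in D_t can be glued to F by placing each
   point of G at distance t(x) from every x in F: the Katetov conditions and the bound 2r on the
   diameter of G make this a metric with distances in D. Embedding the glued space into H over
   the identity on F (universality plus homogeneity of H) lands G in the orbit. An isometry
   between finite subsets of the orbit, extended by the identity on F, extends to an isometry of
   H fixing F pointwise, which therefore preserves the orbit. Hence the orbit belongs to
   U_{D_t}; any two members of U_{D_t} are isometric by back-and-forth, and the orbit
   contains equilateral sets of side r of every finite size, so it is infinite. *)

From Stdlib Require Import Reals List Lra Lia ClassicalEpsilon ProofIrrelevance.
Import ListNotations.
Open Scope R_scope.

Lemma sig_eq {A : Type} {P : A -> Prop} (a b : {x | P x}) :
  proj1_sig a = proj1_sig b -> a = b.
Proof. apply eq_sig_hprop; intros; apply proof_irrelevance. Qed.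

Lemma sig_In_listable {U : Type} (L : list U) :
  exists l : list {x | In x L}, forall s, In s l.
Proof.
  induction L as [|a L [l Hl]].
  - exists []. intros [x []].
  - exists (exist _ a (or_introl eq_refl)
            :: map (fun s => exist _ (proj1_sig s) (or_intror (proj2_sig s))) l).
    intros [x [<-|p]].
    + left. apply sig_eq. reflexivity.
    + right. apply in_map_iff. exists (exist _ x p). split; [apply sig_eq|apply Hl]; reflexivity.
Qed.

Definition metric_on {U : Type} (dU : U -> U -> R) (L : list U) : Prop :=
  forall x y z, In x L -> In y L -> In z L ->
    0 <= dU x y /\ (dU x y = 0 <-> x = y) /\ dU x y = dU y x /\ dU x z <= dU x y + dU y z.

Lemma metric_on_of_is_metric {U : Type} (dU : U -> U -> R) (L : list U) :
  is_metric U dU -> metric_on dU L.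
Proof. intros (? & ? & ? & ?) x y z _ _ _. auto. Qed.

Lemma unit_is_metric : is_metric unit (fun _ _ => 0).
Proof.
  split; [|split; [|split]]; intros; try lra.
  destruct x, y; tauto.
Qed.

Lemma universal_space_inhabited (D' : list R) (V : Type) (dV : V -> V -> R) :
  D_universal_space D' V dV -> In 0 D' -> inhabited V.
Proof.
  intros HV H0.
  destruct (HV unit (fun _ _ => 0) unit_is_metric) as [f _].
  - exists [tt]. intros []. left. reflexivity.
  - intros. exact H0.
  - exact (inhabits (f tt)).
Qed.

Lemma embed_finite_metric {U V : Type} (dU : U -> U -> R) (dV : V -> V -> R) (D' : list R)
  (HV : D_universal_space D' V dV) (H0 : In 0 D') (L : list U) :
  metric_on dU L -> (forall x y, In x L -> In y L -> In (dU x y) D') ->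
  exists f : U -> V, forall x y, In x L -> In y L -> dV (f x) (f y) = dU x y.
Proof.
  intros Hm Hd.
  destruct (universal_space_inhabited D' V dV HV H0) as [v0].
  pose (dS := fun a b : {x | In x L} => dU (proj1_sig a) (proj1_sig b)).
  assert (HmS : is_metric {x | In x L} dS).
  { split; [|split; [|split]]; unfold dS.
    - intros [x px] [y py]. apply (Hm x y x px py px).
    - intros [x px] [y py]. simpl. rewrite (proj1 (proj2 (Hm x y x px py px))).
      split; [intros ->; apply sig_eq; reflexivity|intros E; exact (f_equal (@proj1_sig _ _) E)].
    - intros [x px] [y py]. apply (Hm x y x px py px).
    - intros [x px] [y py] [z pz]. apply (Hm x y z px py pz). }
  destruct (HV _ dS HmS (sig_In_listable L)) as [e He].
  { intros [x px] [y py]. apply Hd; assumption. }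
  exists (fun x => match excluded_middle_informative (In x L) with
                   | left p => e (exist _ x p) | right _ => v0 end).
  intros x y Hx Hy.
  destruct (excluded_middle_informative (In x L)) as [px|]; [|contradiction].
  destruct (excluded_middle_informative (In y L)) as [py|]; [|contradiction].
  apply He.
Qed.

Definition discrete_dist (r : R) (i j : nat) : R := if Nat.eq_dec i j then 0 else r.

Lemma discrete_metric_on (r : R) (L : list nat) : 0 < r -> metric_on (discrete_dist r) L.
Proof.
  intros Hr i j k _ _ _. unfold discrete_dist.
  destruct (Nat.eq_dec i j), (Nat.eq_dec j i), (Nat.eq_dec i k), (Nat.eq_dec j k);
    subst; repeat split; intros; try lra; congruence.
Qed.

Lemma universal_space_not_listable {M N : Type} (dM : M -> M -> R) (D' : list R) (r : R)
  (g : M -> N) :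
  D_universal_space D' M dM -> In 0 D' -> In r D' -> 0 < r ->
  (forall x y, g x = g y -> x = y) -> forall l : list N, ~ (forall x, In (g x) l).
Proof.
  intros HM H0 Hr Hrpos Hg l Hl.
  set (I := seq 0 (S (length l))).
  destruct (embed_finite_metric (discrete_dist r) dM D' HM H0 I) as [f Hf].
  - exact (discrete_metric_on r I Hrpos).
  - intros i j _ _. unfold discrete_dist. destruct (Nat.eq_dec i j); assumption.
  - assert (HND : NoDup (map (fun i => g (f i)) I)).
    { apply NoDup_map_NoDup_ForallPairs; [|apply seq_NoDup].
      intros i j Hi Hj E. apply Hg in E.
      pose proof (Hf i j Hi Hj) as Hij. rewrite E, (Hf j j Hj Hj) in Hij.
      unfold discrete_dist in Hij.
      destruct (Nat.eq_dec j j), (Nat.eq_dec i j); congruence || lra. }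
    assert (Hincl : incl (map (fun i => g (f i)) I) l).
    { intros z Hz. apply in_map_iff in Hz as [i [<- _]]. apply Hl. }
    pose proof (NoDup_incl_length HND Hincl) as Hlen.
    unfold I in Hlen. rewrite length_map, length_seq in Hlen. lia.
Qed.

Lemma universal_space_realises (D' : list R) (M : Type) (dM : M -> M -> R) :
  is_metric M dM -> D_universal_space D' M dM -> In 0 D' -> (forall r, In r D' -> 0 <= r) ->
  forall r, In r D' -> exists x y, dM x y = r.
Proof.
  intros (_ & HM2 & _) HM H0 Hpos r Hr.
  destruct (Req_dec r 0) as [->|Hr0].
  - destruct (universal_space_inhabited D' M dM HM H0) as [x].
    exists x, x. apply HM2. reflexivity.
  - assert (Hrpos : 0 < r) by (destruct (Hpos r Hr); [assumption|congruence]).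
    destruct (embed_finite_metric (discrete_dist r) dM D' HM H0 [0%nat; 1%nat]) as [f Hf].
    + exact (discrete_metric_on r _ Hrpos).
    + intros i j _ _. unfold discrete_dist. destruct (Nat.eq_dec i j); assumption.
    + exists (f 0%nat), (f 1%nat). apply Hf; simpl; auto.
Qed.

Lemma in_U_dist_In (D' : list R) (M : Type) (dM : M -> M -> R) :
  in_U D' M dM -> forall x y, In (dM x y) D'.
Proof. intros (_ & _ & _ & [Hd _] & _). exact Hd. Qed.

Lemma in_U_dist_eq0 (D' : list R) (M : Type) (dM : M -> M -> R) :
  in_U D' M dM -> forall x y, dM x y = 0 <-> x = y.
Proof. intros ((_ & Hd & _) & _). exact Hd. Qed.

Definition partial_isometry {A B : Type} (dA : A -> A -> R) (dB : B -> B -> R)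
  (P : list (A * B)) : Prop :=
  forall p q, In p P -> In q P -> dB (snd p) (snd q) = dA (fst p) (fst q).

Lemma partial_isometry_cons {A B : Type} (dA : A -> A -> R) (dB : B -> B -> R)
  (P : list (A * B)) (x : A) (v : B) :
  is_metric A dA -> is_metric B dB -> partial_isometry dA dB P ->
  (forall p, In p P -> dB v (snd p) = dA x (fst p)) ->
  partial_isometry dA dB ((x, v) :: P).
Proof.
  intros (_ & HA2 & HA3 & _) (_ & HB2 & HB3 & _) HP Hv p q [<-|Hp] [<-|Hq]; simpl.
  - rewrite (proj2 (HA2 x x) eq_refl), (proj2 (HB2 v v) eq_refl). reflexivity.
  - apply Hv. exact Hq.
  - rewrite HA3, HB3. apply Hv. exact Hp.
  - apply HP; assumption.
Qed.

(* Universality embeds [L] somehow; homogeneity of [V] then moves that embedding onto one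
   agreeing with [P]. *)
Lemma extend_partial_isometry {U V : Type} (dU : U -> U -> R) (dV : V -> V -> R)
  (D' : list R) (H0 : In 0 D') (HV : in_U D' V dV) (P : list (U * V)) (B : list U) :
  let L := map fst P ++ B in
  partial_isometry dU dV P -> metric_on dU L ->
  (forall x y, In x L -> In y L -> In (dU x y) D') ->
  exists psi : U -> V,
    (forall x y, In x L -> In y L -> dV (psi x) (psi y) = dU x y) /\
    (forall p, In p P -> psi (fst p) = snd p).
Proof.
  intros L HP Hm Hd.
  destruct HV as [(_ & HV2 & _) (_ & Hhom & _ & Huniv)].
  destruct (embed_finite_metric dU dV D' Huniv H0 L Hm Hd) as [f Hf].
  assert (HfstL : forall p, In p P -> In (fst p) L).
  { intros p Hp. apply in_or_app. left. apply in_map. exact Hp. }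
  pose (g := fun y : V =>
    match excluded_middle_informative (exists p, In p P /\ f (fst p) = y) with
    | left E => snd (proj1_sig (constructive_indefinite_description _ E))
    | right _ => y
    end).
  assert (Hg : forall p, In p P -> g (f (fst p)) = snd p).
  { intros p Hp. unfold g.
    destruct (excluded_middle_informative _) as [E|E];
      [|exfalso; apply E; exists p; split; auto].
    destruct (constructive_indefinite_description _ E) as [p' [Hp' Ep']]. simpl.
    apply HV2. rewrite (HP p' p Hp' Hp), <- (Hf _ _ (HfstL p' Hp') (HfstL p Hp)), Ep'.
    apply HV2. reflexivity. }
  destruct (Hhom (map (fun p => f (fst p)) P) g) as [h (Hh1 & _ & Hh3)].
  { intros y y' Hy Hy'.
    apply in_map_iff in Hy as [p [<- Hp]]. apply in_map_iff in Hy' as [q [<- Hq]].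
    rewrite (Hg p Hp), (Hg q Hq), (HP p q Hp Hq). symmetry. apply Hf; auto. }
  exists (fun x => h (f x)). split.
  - intros x y Hx Hy. rewrite Hh1. apply Hf; assumption.
  - intros p Hp. rewrite Hh3 by (apply (in_map (fun p => f (fst p))); exact Hp). apply Hg, Hp.
Qed.

Lemma one_point_extension {U V : Type} (dU : U -> U -> R) (dV : V -> V -> R) (D' : list R)
  (H0 : In 0 D') (HU : is_metric U dU) (HUd : forall x y, In (dU x y) D')
  (HV : in_U D' V dV) (P : list (U * V)) (u : U) :
  partial_isometry dU dV P -> exists v, forall p, In p P -> dV v (snd p) = dU u (fst p).
Proof.
  intros HP.
  destruct (extend_partial_isometry dU dV D' H0 HV P [u] HP (metric_on_of_is_metric _ _ HU))
    as [psi [Hpsi Hfix]].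
  { intros; apply HUd. }
  exists (psi u). intros p Hp. rewrite <- (Hfix p Hp).
  apply Hpsi; apply in_or_app; [right; left; reflexivity|left; apply in_map; exact Hp].
Qed.

Definition extend_pairs {U V : Type} (dU : U -> U -> R) (dV : V -> V -> R) (v0 : V)
  (P : list (U * V)) (u : U) : V :=
  epsilon (inhabits v0) (fun v => forall p, In p P -> dV v (snd p) = dU u (fst p)).

Lemma extend_pairs_spec {U V : Type} (dU : U -> U -> R) (dV : V -> V -> R) (D' : list R)
  (v0 : V) (H0 : In 0 D') (HU : is_metric U dU) (HUd : forall x y, In (dU x y) D')
  (HV : in_U D' V dV) (P : list (U * V)) (u : U) :
  partial_isometry dU dV P ->
  forall p, In p P -> dV (extend_pairs dU dV v0 P u) (snd p) = dU u (fst p).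
Proof.
  intros HP. unfold extend_pairs. apply epsilon_spec.
  exact (one_point_extension dU dV D' H0 HU HUd HV P u HP).
Qed.

Definition swap_pairs {A B : Type} (P : list (A * B)) : list (B * A) :=
  map (fun p => (snd p, fst p)) P.

Lemma partial_isometry_swap {A B : Type} (dA : A -> A -> R) (dB : B -> B -> R)
  (P : list (A * B)) :
  partial_isometry dA dB P -> partial_isometry dB dA (swap_pairs P).
Proof.
  intros HP p q Hp Hq.
  apply in_map_iff in Hp as [p' [<- Hp]]. apply in_map_iff in Hq as [q' [<- Hq]].
  symmetry. apply HP; assumption.
Qed.

Definition decode {M : Type} (m0 : M) (c : M -> nat) (k : nat) : M :=
  epsilon (inhabits m0) (fun x => c x = k).

Lemma decode_code {M : Type} (m0 : M) (c : M -> nat) (x : M) :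
  (forall x y, c x = c y -> x = y) -> decode m0 c (c x) = x.
Proof.
  intros Hc. apply Hc. apply (epsilon_spec (inhabits m0) (fun z => c z = c x)).
  exists x. reflexivity.
Qed.

Section BackAndForth.

Variables (D' : list R) (M N : Type) (dM : M -> M -> R) (dN : N -> N -> R).
Hypotheses (H0 : In 0 D') (HM : in_U D' M dM) (HN : in_U D' N dN).
Variables (m0 : M) (n0 : N) (cM : M -> nat) (cN : N -> nat).
Hypotheses (HcM : forall x y, cM x = cM y -> x = y) (HcN : forall x y, cN x = cN y -> x = y).

Definition forth (P : list (M * N)) (x : M) : list (M * N) :=
  (x, extend_pairs dM dN n0 P x) :: P.

Definition back (P : list (M * N)) (y : N) : list (M * N) :=
  (extend_pairs dN dM m0 (swap_pairs P) y, y) :: P.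

(* Stage [k] adds the [k]-th point of [M] to the domain and the [k]-th point of [N] to the range. *)
Fixpoint back_and_forth (n : nat) : list (M * N) :=
  match n with
  | O => []
  | S k => back (forth (back_and_forth k) (decode m0 cM k)) (decode n0 cN k)
  end.

Lemma forth_isometry (P : list (M * N)) (x : M) :
  partial_isometry dM dN P -> partial_isometry dM dN (forth P x).
Proof.
  intros HP. apply partial_isometry_cons; [exact (proj1 HM)|exact (proj1 HN)|exact HP|].
  exact (extend_pairs_spec dM dN D' n0 H0 (proj1 HM) (in_U_dist_In _ _ _ HM) HN P x HP).
Qed.

Lemma back_isometry (P : list (M * N)) (y : N) :
  partial_isometry dM dN P -> partial_isometry dM dN (back P y).
Proof.
  intros HP. apply partial_isometry_cons; [exact (proj1 HM)|exact (proj1 HN)|exact HP|].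
  intros p Hp. symmetry.
  apply (extend_pairs_spec dN dM D' m0 H0 (proj1 HN) (in_U_dist_In _ _ _ HN)
           HM _ y (partial_isometry_swap dM dN P HP) (snd p, fst p)).
  apply (in_map (fun p => (snd p, fst p))). exact Hp.
Qed.

Lemma back_and_forth_isometry (n : nat) : partial_isometry dM dN (back_and_forth n).
Proof.
  induction n as [|k IH]; [intros p q []|].
  apply back_isometry, forth_isometry, IH.
Qed.

Lemma back_and_forth_mono (n m : nat) :
  (n <= m)%nat -> incl (back_and_forth n) (back_and_forth m).
Proof.
  induction 1 as [|m _ IH]; [apply incl_refl|].
  intros p Hp. do 2 right. apply IH, Hp.
Qed.

Lemma back_and_forth_union_isometry (n m : nat) (p q : M * N) :
  In p (back_and_forth n) -> In q (back_and_forth m) -> dN (snd p) (snd q) = dM (fst p) (fst q).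
Proof.
  intros Hp Hq. apply (back_and_forth_isometry (Nat.max n m)).
  - apply (back_and_forth_mono n); [lia|exact Hp].
  - apply (back_and_forth_mono m); [lia|exact Hq].
Qed.

Definition back_and_forth_map (x : M) : N :=
  extend_pairs dM dN n0 (back_and_forth (cM x)) x.

Lemma back_and_forth_map_graph (x : M) :
  In (x, back_and_forth_map x) (back_and_forth (S (cM x))).
Proof. simpl. rewrite (decode_code m0 cM x HcM). right. left. reflexivity. Qed.

Lemma back_and_forth_range (y : N) : exists x, In (x, y) (back_and_forth (S (cN y))).
Proof. simpl. rewrite (decode_code n0 cN y HcN). eexists. left. reflexivity. Qed.

Lemma back_and_forth_isometric : isometric M dM N dN.
Proof.
  exists back_and_forth_map. split.
  - intros x x'. exact (back_and_forth_union_isometry _ _ _ _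
                          (back_and_forth_map_graph x) (back_and_forth_map_graph x')).
  - intros y. destruct (back_and_forth_range y) as [x Hx]. exists x.
    apply (in_U_dist_eq0 D' N dN HN).
    pose proof (back_and_forth_union_isometry _ _ _ _ (back_and_forth_map_graph x) Hx) as E.
    simpl in E. rewrite E.
    apply (in_U_dist_eq0 D' M dM HM). reflexivity.
Qed.

End BackAndForth.

Lemma in_U_isometric (D' : list R) (M : Type) (dM : M -> M -> R) (N : Type) (dN : N -> N -> R) :
  In 0 D' -> in_U D' M dM -> in_U D' N dN -> isometric M dM N dN.
Proof.
  intros H0 HM HN.
  pose proof HM as (_ & [cM HcM] & _ & _ & HMu).
  pose proof HN as (_ & [cN HcN] & _ & _ & HNu).
  destruct (universal_space_inhabited D' M dM HMu H0) as [m0].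
  destruct (universal_space_inhabited D' N dN HNu H0) as [n0].
  exact (back_and_forth_isometric D' M N dM dN H0 HM HN m0 n0 cM cN HcM HcN).
Qed.

Lemma rank_le {M : Type} (F : list M) (t : M -> R) (x : M) : In x F -> rank M F t <= t x.
Proof.
  destruct F as [|a xs]; [intros []|]. simpl rank.
  revert x. induction xs as [|b xs IH]; intros x Hx.
  - destruct Hx as [<-|[]]. apply Rle_refl.
  - simpl. destruct Hx as [<-|[<-|Hx]].
    + eapply Rle_trans; [apply Rmin_r|]. apply IH. left. reflexivity.
    + apply Rmin_l.
    + eapply Rle_trans; [apply Rmin_r|]. apply IH. right. exact Hx.
Qed.

Lemma rank_attained {M : Type} (F : list M) (t : M -> R) :
  F <> [] -> exists x, In x F /\ rank M F t = t x.
Proof.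
  destruct F as [|a xs]; [contradiction|intros _]. simpl rank.
  induction xs as [|b xs [x [Hx E]]].
  - exists a. split; [left|]; reflexivity.
  - simpl. destruct (Rle_dec (t b) (fold_right (fun y acc => Rmin (t y) acc) (t a) xs)).
    + exists b. split; [right; left; reflexivity|]. apply Rmin_left. assumption.
    + exists x. split; [destruct Hx as [<-|Hx]; simpl; auto|].
      rewrite Rmin_right by lra. exact E.
Qed.

Lemma In_D_restrict (D : list R) (r n : R) : In n (D_restrict D r) <-> In n D /\ n <= 2 * r.
Proof.
  unfold D_restrict. rewrite filter_In.
  destruct (Rle_dec n (2 * r)); intuition discriminate.
Qed.

Lemma In_inr_app_map_inl {A B : Type} (x : B) (F : list B) (l : list A) :
  In (inr x) (map inr F ++ map inl l) -> In x F.
Proof.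
  intros Hx. apply in_app_or in Hx as [Hx|Hx]; apply in_map_iff in Hx as [y [E Hy]];
    [injection E as <-; exact Hy|discriminate E].
Qed.

Definition amalgam {G M : Type} (dG : G -> G -> R) (d : M -> M -> R) (t : M -> R)
  (a b : G + M) : R :=
  match a, b with
  | inl g, inl g' => dG g g'
  | inr x, inr y => d x y
  | inl _, inr y => t y
  | inr x, inl _ => t x
  end.

Section Orbit.

Variables (D : list R) (H : Type) (d : H -> H -> R) (F : list H) (t : H -> R).
Hypotheses (HD0 : In 0 D) (HDpos : forall r, In r D -> 0 <= r) (HH : in_U D H d)
  (HF : F <> []) (Ht : katetov D H d F t).

Local Notation Dt := (D_restrict D (rank H F t)).
Local Notation orbit := (orb H d F t).
Local Notation Orb := {y : H | orbit y}.
Local Notation dOrb := (fun a b : Orb => d (proj1_sig a) (proj1_sig b)).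

Lemma katetov_pos (x : H) : In x F -> 0 < t x.
Proof.
  intros Hx. destruct (proj1 Ht x Hx) as [HtD Ht0].
  destruct (HDpos _ HtD); [assumption|congruence].
Qed.

Lemma rank_pos : 0 < rank H F t.
Proof. destruct (rank_attained F t HF) as [x [Hx ->]]. exact (katetov_pos x Hx). Qed.

Lemma rank_In_Dt : In (rank H F t) Dt.
Proof.
  apply In_D_restrict. destruct (rank_attained F t HF) as [x [Hx E]].
  split; [rewrite E; apply (proj1 Ht x Hx)|pose proof rank_pos; lra].
Qed.

Lemma zero_In_Dt : In 0 Dt.
Proof. apply In_D_restrict. split; [exact HD0|pose proof rank_pos; lra]. Qed.

Lemma orbit_of_dist (y : H) : (forall x, In x F -> d y x = t x) -> orbit y.
Proof.
  intros Hy. split; [|exact Hy]. intros HyF.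
  pose proof (Hy y HyF) as E. rewrite (proj2 (in_U_dist_eq0 D H d HH y y) eq_refl) in E.
  pose proof (katetov_pos y HyF). lra.
Qed.

Lemma orbit_dist_le (y z : H) : orbit y -> orbit z -> d y z <= 2 * rank H F t.
Proof.
  intros [_ Hy] [_ Hz]. destruct (rank_attained F t HF) as [x [Hx ->]].
  destruct (proj1 HH) as (_ & _ & Hsym & Htri).
  pose proof (Htri y x z) as T. rewrite (Hy x Hx), (Hsym x z), (Hz x Hx) in T. lra.
Qed.

Lemma katetov_bounds (x y : H) : In x F -> In y F ->
  t x - t y <= d x y /\ t y - t x <= d x y /\ d x y <= t x + t y.
Proof.
  intros Hx Hy. destruct (proj2 Ht x y Hx Hy) as [Habs Hsum].
  pose proof (Rle_abs (t x - t y)). pose proof (Rle_abs (t y - t x)).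
  rewrite (Rabs_minus_sym (t y)) in *. repeat split; lra.
Qed.

Lemma amalgam_metric_on {G : Type} (dG : G -> G -> R) (lG : list G) :
  is_metric G dG -> (forall g g', dG g g' <= 2 * rank H F t) ->
  metric_on (amalgam dG d t) (map inr F ++ map inl lG).
Proof.
  intros (HG1 & HG2 & HG3 & HG4) HGr.
  destruct (proj1 HH) as (Hd1 & Hd2 & Hd3 & Hd4).
  pose proof (@In_inr_app_map_inl G H) as HinF.
  assert (HGt : forall g g' x, In x F -> dG g g' <= 2 * t x).
  { intros g g' x Hx. pose proof (HGr g g'). pose proof (rank_le F t x Hx). lra. }
  intros a b c Ha Hb Hc. split; [|split; [|split]].
  - destruct a as [g|x], b as [g'|y]; simpl; [apply HG1| | |apply Hd1];
      apply Rlt_le, katetov_pos; eapply HinF; eassumption.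
  - destruct a as [g|x], b as [g'|y]; simpl.
    + rewrite HG2. split; congruence.
    + pose proof (katetov_pos y (HinF _ _ _ Hb)). split; [lra|discriminate].
    + pose proof (katetov_pos x (HinF _ _ _ Ha)). split; [lra|discriminate].
    + rewrite Hd2. split; congruence.
  - destruct a, b; simpl; auto.
  - destruct a as [g1|x1], b as [g2|x2], c as [g3|x3]; simpl;
      repeat match goal with Hq : In (inr _) _ |- _ => apply HinF in Hq end.
    + apply HG4.
    + pose proof (HG1 g1 g2). lra.
    + pose proof (HGt g1 g3 x2 Hb). lra.
    + pose proof (katetov_bounds x2 x3 Hb Hc). lra.
    + pose proof (HG1 g2 g3). lra.
    + pose proof (katetov_bounds x1 x3 Ha Hc). lra.
    + pose proof (katetov_bounds x1 x2 Ha Hb). lra.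
    + apply Hd4.
Qed.

Lemma amalgam_dist_In {G : Type} (dG : G -> G -> R) (lG : list G) :
  (forall g g', In (dG g g') D) -> forall a b, In a (map inr F ++ map inl lG) ->
  In b (map inr F ++ map inl lG) -> In (amalgam dG d t a b) D.
Proof.
  intros HGD [g|x] [g'|y] Ha Hb; simpl.
  - apply HGD.
  - apply (proj1 Ht). exact (In_inr_app_map_inl y F lG Hb).
  - apply (proj1 Ht). exact (In_inr_app_map_inl x F lG Ha).
  - exact (in_U_dist_In D H d HH x y).
Qed.

Lemma orbit_universal : D_universal_space Dt Orb dOrb.
Proof.
  intros G dG HG [lG HlG] HGd.
  pose (P := map (fun x => (@inr G H x, x)) F).
  assert (HP : map fst P = map inr F) by (unfold P; rewrite map_map; reflexivity).
  destruct (extend_partial_isometry (amalgam dG d t) d D HD0 HH P (map inl lG))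
    as [psi [Hpsi Hfix]].
  - intros p q Hp Hq.
    apply in_map_iff in Hp as [x [<- _]]. apply in_map_iff in Hq as [y [<- _]]. reflexivity.
  - rewrite HP. apply amalgam_metric_on; [exact HG|].
    intros g g'. apply (proj1 (In_D_restrict D _ _) (HGd g g')).
  - rewrite HP. apply amalgam_dist_In. intros g g'. apply (proj1 (In_D_restrict D _ _) (HGd g g')).
  - rewrite HP in Hpsi.
    assert (HinG : forall g, In (inl g) (map inr F ++ map inl lG))
      by (intro g; apply in_or_app; right; apply in_map, HlG).
    assert (Horb : forall g, orbit (psi (inl g))).
    { intros g. apply orbit_of_dist. intros x Hx.
      assert (Ex : psi (inr x) = x) by exact (Hfix (inr x, x) (in_map _ _ _ Hx)).
      rewrite <- Ex at 1.
      apply Hpsi; [apply HinG|apply in_or_app; left; apply in_map, Hx]. }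
    exists (fun g => exist _ (psi (inl g)) (Horb g)).
    intros g g'. apply Hpsi; apply HinG.
Qed.

Definition orbit_lift (g : Orb -> Orb) (y : H) : H :=
  match excluded_middle_informative (orbit y) with
  | left p => proj1_sig (g (exist _ y p))
  | right _ => y
  end.

Lemma orbit_lift_orbit (g : Orb -> Orb) (s : Orb) : orbit_lift g (proj1_sig s) = proj1_sig (g s).
Proof.
  destruct s as [y p]. unfold orbit_lift. simpl.
  destruct (excluded_middle_informative (orbit y)) as [p'|]; [|contradiction].
  rewrite (proof_irrelevance _ p' p). reflexivity.
Qed.

Lemma orbit_lift_F (g : Orb -> Orb) (x : H) : In x F -> orbit_lift g x = x.
Proof.
  intros Hx. unfold orbit_lift.
  destruct (excluded_middle_informative (orbit x)) as [p|]; [|reflexivity].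
  exfalso. exact (proj1 p Hx).
Qed.

Lemma orbit_lift_isometric (A : list Orb) (g : Orb -> Orb) :
  (forall s s', In s A -> In s' A -> dOrb (g s) (g s') = dOrb s s') ->
  forall a b, In a (F ++ map (@proj1_sig _ _) A) -> In b (F ++ map (@proj1_sig _ _) A) ->
  d (orbit_lift g a) (orbit_lift g b) = d a b.
Proof.
  intros Hg. destruct (proj1 HH) as (_ & _ & Hsym & _).
  assert (HF_O : forall x (s : Orb), In x F -> d x (proj1_sig s) = t x).
  { intros x [y p] Hx. simpl. destruct p as [_ Hy]. rewrite Hsym. apply Hy, Hx. }
  intros a b Ha Hb. apply in_app_or in Ha as [Ha|Ha]; apply in_app_or in Hb as [Hb|Hb];
    repeat match goal with Hq : In _ (map _ _) |- _ => apply in_map_iff in Hq as [? [<- ?]] end;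
    repeat first [rewrite orbit_lift_orbit | rewrite orbit_lift_F by assumption].
  - reflexivity.
  - rewrite !HF_O by assumption. reflexivity.
  - rewrite !(Hsym _ b), !HF_O by assumption. reflexivity.
  - apply Hg; assumption.
Qed.

Lemma isometry_fixing_F_orbit (h : H -> H) :
  (forall x y, d (h x) (h y) = d x y) -> (forall x, In x F -> h x = x) ->
  forall y, orbit (h y) <-> orbit y.
Proof.
  intros Hh Hfix y. split; intros [_ Hy]; apply orbit_of_dist; intros x Hx.
  - rewrite <- (Hy x Hx), <- (Hh y x), (Hfix x Hx). reflexivity.
  - transitivity (d (h y) (h x)); [rewrite (Hfix x Hx); reflexivity|].
    rewrite Hh. apply Hy, Hx.
Qed.

Lemma orbit_homogeneous : homogeneous Orb dOrb.
Proof.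
  intros A g Hg. destruct HH as (_ & _ & Hhom & _).
  destruct (Hhom (F ++ map (@proj1_sig _ _) A) (orbit_lift g)
              (orbit_lift_isometric A g Hg)) as [h (Hh & Hsurj & Hext)].
  assert (HhF : forall x, In x F -> h x = x).
  { intros x Hx. rewrite Hext by (apply in_or_app; left; exact Hx). apply orbit_lift_F, Hx. }
  pose proof (isometry_fixing_F_orbit h Hh HhF) as Hh_orbit.
  exists (fun s => exist _ (h (proj1_sig s)) (proj2 (Hh_orbit _) (proj2_sig s))).
  split; [|split].
  - intros s s'. apply Hh.
  - intros s. destruct (Hsurj (proj1_sig s)) as [y Hy].
    assert (Hoy : orbit y) by (apply Hh_orbit; rewrite Hy; apply proj2_sig).
    exists (exist _ y Hoy). apply sig_eq. exact Hy.
  - intros s Hs. apply sig_eq. simpl. rewrite <- orbit_lift_orbit.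
    apply Hext, in_or_app. right. apply in_map, Hs.
Qed.

Lemma orbit_is_metric : is_metric Orb dOrb.
Proof.
  destruct (proj1 HH) as (Hd1 & Hd2 & Hd3 & Hd4).
  split; [|split; [|split]]; intros; try apply Hd1; try apply Hd3; try apply Hd4.
  rewrite Hd2. split; [apply sig_eq|intros ->; reflexivity].
Qed.

Lemma orbit_countable : countable Orb.
Proof.
  destruct (proj1 (proj2 HH)) as [c Hc].
  exists (fun s => c (proj1_sig s)). intros s s' E. apply sig_eq, Hc, E.
Qed.

Lemma orbit_distance_set : distance_set_eq Dt Orb dOrb.
Proof.
  split.
  - intros [y py] [z pz]. apply In_D_restrict. split.
    + apply (in_U_dist_In D H d HH).
    + apply orbit_dist_le; assumption.
  - apply universal_space_realises.
    + exact orbit_is_metric.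
    + exact orbit_universal.
    + exact zero_In_Dt.
    + intros r Hr. apply HDpos, (proj1 (In_D_restrict D _ _) Hr).
Qed.

Lemma orbit_in_U : in_U Dt Orb dOrb.
Proof.
  exact (conj orbit_is_metric (conj orbit_countable
           (conj orbit_homogeneous (conj orbit_distance_set orbit_universal)))).
Qed.

End Orbit.

Theorem theorem2p2 (D : list R)
  (HD0 : In 0 D) (HDpos : forall r, In r D -> 0 <= r)
  (HDu : universal D)
  (H : Type) (d : H -> H -> R) (HH : in_U D H d)
  (F : list H) (t : H -> R) (HF : F <> nil) (Ht : katetov D H d F t) :
  let Dt := D_restrict D (rank H F t) in
  let O := { y : H | orb H d F t y } in
  let dO := fun a b : O => d (proj1_sig a) (proj1_sig b) in
  universal Dt /\
  (forall (U : Type) (dU : U -> U -> R), in_U Dt U dU -> isometric O dO U dU) /\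
  ~ (exists l : list H, forall y, orb H d F t y -> In y l).
Proof.
  intros Dt O dO.
  pose proof (orbit_in_U D H d F t HD0 HDpos HH HF Ht) as HO.
  pose proof (zero_In_Dt D H d F t HD0 HDpos HF Ht) as H0t.
  split; [|split].
  - exists O, dO. exact HO.
  - intros U dU HU. exact (in_U_isometric Dt O dO U dU H0t HO HU).
  - intros [l Hl].
    apply (universal_space_not_listable dO Dt (rank H F t) (@proj1_sig _ _)
             (orbit_universal D H d F t HD0 HDpos HH Ht) H0t
             (rank_In_Dt D H d F t HDpos HF Ht) (rank_pos D H d F t HDpos HF Ht) sig_eq l).
    intros s. apply Hl, proj2_sig.
Qed.
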